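(* Let $n\ge3$ and $\mathcal{A}\in\mathcal{R}_n$. Then $\operatorname{Ann}\mathcal{A}=\langle e_n\rangle$, and the automorphisms of $\mathcal{A}$ are exactly the linear maps $e_1\mapsto e_1+xe_n$, $e_i\mapsto e_i$ ($2\le i\le n$), with $x\in\mathbb{C}$.
   Context: Over $\mathbb{C}$, with basis $e_1,\dots,e_n$ and $e_ie_j=\sum_kc_{ij}^ke_k$. Condition ( * ): $c_{ij}^k=0$ whenever $k\le\max\{i,j\}$. For $n\ge3$, $\mathcal{R}_n$ is the family of algebra structures satisfying ( * ) with $e_i^2=e_{i+1}$ for $1\le i\le n-1$, $c_{21}^3=1$, $c_{1i}^{i+1}=0$ for $2\le i\le n-1$, and remaining structure constants $c_{ij}^k$ ($i\ne j$, $k>\max\{i,j\}$) arbitrary. $\operatorname{Ann}\mathcal{A}=\{a: a\mathcal{A}+\mathcal{A}a=0\}$. *)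

From HB Require Import structures.
From mathcomp Require Import all_boot all_order all_algebra.
From mathcomp Require Import reals Rstruct complex.
From Stdlib Require Rdefinitions.
Set Implicit Arguments. Unset Strict Implicit. Unset Printing Implicit Defensive.
Import Order.TTheory GRing.Theory Num.Theory.
Local Open Scope ring_scope.

Definition CC : Type := complex Rdefinitions.R.

(* Structure constants: c i j k = c_{ij}^k, indices 0-based ('I_n stands for {1..n}
   shifted by one). Vectors of the algebra are row vectors 'rV[CC]_n
   (coordinates in the basis e_1..e_n). *)
Definition strconst (n : nat) := 'I_n -> 'I_n -> 'I_n -> CC.

Definition ev (n k : nat) : 'rV[CC]_n := \row_(j < n) ((j == k :> nat)%:R).

Definition amul (n : nat) (c : strconst n) (u v : 'rV[CC]_n) : 'rV[CC]_n :=
  \row_(k < n) \sum_(i < n) \sum_(j < n) u 0 i * v 0 j * c i j k.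

Definition in_Rn (n : nat) (c : strconst n) : Prop :=
  (* condition ( * ): c_{ij}^k = 0 whenever k <= max(i,j) *)
  (forall i j k : 'I_n, (k <= maxn i j)%N -> c i j k = 0) /\
  (* e_i^2 = e_{i+1} for 1 <= i <= n-1 *)
  (forall i k : 'I_n, (i.+1 < n)%N -> c i i k = (k == i.+1 :> nat)%:R) /\
  (* c_{21}^3 = 1 *)
  (forall i j k : 'I_n, i = 1%N :> nat -> j = 0%N :> nat -> k = 2%N :> nat ->
      c i j k = 1) /\
  (* c_{1i}^{i+1} = 0 for 2 <= i <= n-1 *)
  (forall j i k : 'I_n, j = 0%N :> nat -> (1 <= i)%N -> k = i.+1 :> nat ->
      c j i k = 0).

Definition in_Ann (n : nat) (c : strconst n) (a : 'rV[CC]_n) : Prop :=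
  forall u : 'rV[CC]_n, amul c a u = 0 /\ amul c u a = 0.

Definition is_aut (n : nat) (c : strconst n) (A : 'M[CC]_n) : Prop :=
  A \in unitmx /\
  forall u v : 'rV[CC]_n, amul c (u *m A) (v *m A) = amul c u v *m A.

From HB Require Import structures.
From mathcomp Require Import all_boot all_order all_algebra.
From mathcomp Require Import reals Rstruct complex.
From mathcomp Require Import zify ring.
Import GRing.Theory.
Set Implicit Arguments. Unset Strict Implicit.
Local Open Scope ring_scope.

(* Indices are 0-based throughout, as in the code: the basis is e_0..e_{n-1},
   and V_p is the span of e_p, ..., e_{n-1} (row vectors whose first p
   coordinates vanish).
   - Condition ( * ) says that V_p A + A V_p lies in V_{p+1}; in particular
     e_{n-1} annihilates the algebra.  Moreover, since c_{pp}^{p+1} = 1, the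
     e_{p+1}-coordinate of a product u v with u, v in V_p is u_p v_p.
   - Annihilator: if a annihilates, then a_p = (a e_p)_{p+1} = 0 for every
     p < n-1, so a is a multiple of e_{n-1}.
   - Automorphisms: as e_{p+1} = e_p^2, an automorphism phi maps e_p into V_p,
     so its matrix A is upper triangular with diagonal a, a^2, a^4, ...; it is
     invertible, so a != 0.  The relations e_0 e_j in V_{j+2} (j >= 1) force
     the first row of A to vanish strictly between A_00 and A_{0,n-1}, and
     e_1 e_0 = e_2 gives a^4 = a^3, i.e. a = 1.  Hence phi(e_0) = e_0 + x e_{n-1}
     and, e_{n-1} being annihilating, phi(e_p) = e_p for p >= 1.
   - Conversely the shears 1 + x E, E = E_{0,n-1}, are invertible (E^2 = 0)
     and preserve the product: they only add multiples of e_{n-1}, which the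
     product ignores, and products have no e_0-component. *)

Lemma sum_only n (F : 'I_n -> CC) (i0 : 'I_n) :
  (forall i, i != i0 -> F i = 0) -> \sum_i F i = F i0.
Proof. by move=> F0; rewrite (bigD1 i0) //= big1 ?addr0. Qed.

Lemma ord_neq n (i j : 'I_n) : (i != j) = (i != j :> nat).
Proof. by []. Qed.

Lemma ev_neq n (k : nat) (j : 'I_n) : (j != k :> nat) -> ev n k 0 j = 0.
Proof. by rewrite mxE => /negbTE ->. Qed.

Lemma ev_row n (i : 'I_n) (A : 'M[CC]_n) : ev n i *m A = row i A.
Proof.
rewrite rowE; congr (_ *m _); apply/rowP => j.
by rewrite !mxE eqxx.
Qed.

Lemma ev_dot n (i j : nat) : (i < n)%N -> ev n i *m (ev n j)^T = (i == j)%:R%:M.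
Proof.
move=> hi; apply/matrixP => a b; rewrite !ord1 !mxE /= mulr1n.
rewrite (sum_only (i0 := Ordinal hi)) => [|k hk]; first by rewrite !mxE /= eqxx mul1r.
by move: hk; rewrite !mxE ord_neq /= => /negbTE ->; rewrite mul0r.
Qed.

Definition vanishes_below n (p : nat) (u : 'rV[CC]_n) : Prop :=
  forall i : 'I_n, (i < p)%N -> u 0 i = 0.

Lemma ev_vanishes n (k : nat) : vanishes_below k (ev n k).
Proof. by move=> i hi; rewrite ev_neq //; lia. Qed.

Lemma vanishes_first n (w : 'rV[CC]_n) :
  vanishes_below 1 w -> w *m (ev n 0)^T = 0.
Proof.
move=> w0; apply/matrixP => a b; rewrite !ord1 !mxE; apply: big1 => j _.
rewrite !mxE; case: (posnP j) => [j0|j0]; first by rewrite w0 ?j0 ?mul0r.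
by rewrite mulr0.
Qed.

Definition E1n n : 'M[CC]_n := (ev n 0)^T *m ev n n.-1.
Definition aut_mx n (x : CC) : 'M[CC]_n := 1%:M + x *: E1n n.

Lemma mul_aut_mx n x (u : 'rV[CC]_n) :
  u *m aut_mx n x = u + x *: (u *m (ev n 0)^T *m ev n n.-1).
Proof. by rewrite mulmxDr mulmx1 /E1n -scalemxAr mulmxA. Qed.

Lemma E1n_sq n : (1 < n)%N -> E1n n *m E1n n = 0.
Proof.
move=> hn; rewrite /E1n !mulmxA -[(ev n 0)^T *m _ *m _]mulmxA ev_dot; last by lia.
rewrite (_ : (n.-1 == 0)%N = false); last by lia.
by rewrite raddf0 mulmx0 mul0mx.
Qed.

Lemma aut_mx_mul n x y : (1 < n)%N -> aut_mx n x *m aut_mx n y = aut_mx n (x + y).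
Proof.
move=> hn; rewrite /aut_mx mulmxDl mul1mx !mulmxDr mulmx1 -scalemxAl -scalemxAr.
by rewrite E1n_sq // !scaler0 addr0 scalerDl addrA (addrAC _ (y *: _)).
Qed.

Lemma aut_mx_unit n x : (1 < n)%N -> aut_mx n x \in unitmx.
Proof.
move=> hn; apply: (proj1 (mulmx1_unit (B := aut_mx n (- x)) _)).
by rewrite aut_mx_mul // addrN /aut_mx scale0r addr0.
Qed.

Section Products.
Variables (n : nat) (c : strconst n).

Lemma amulDl u v w : amul c (u + v) w = amul c u w + amul c v w.
Proof.
apply/rowP => k; rewrite !mxE -big_split; apply: eq_bigr => i _.
by rewrite -big_split; apply: eq_bigr => j _; rewrite !mxE !mulrDl.
Qed.

Lemma amulDr u v w : amul c w (u + v) = amul c w u + amul c w v.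
Proof.
apply/rowP => k; rewrite !mxE -big_split; apply: eq_bigr => i _.
by rewrite -big_split; apply: eq_bigr => j _; rewrite !mxE mulrDr mulrDl.
Qed.

Lemma amulZl t u w : amul c (t *: u) w = t *: amul c u w.
Proof.
apply/rowP => k; rewrite !mxE mulr_sumr; apply: eq_bigr => i _.
by rewrite mulr_sumr; apply: eq_bigr => j _; rewrite !mxE !mulrA.
Qed.

Lemma amulZr t u w : amul c w (t *: u) = t *: amul c w u.
Proof.
apply/rowP => k; rewrite !mxE mulr_sumr; apply: eq_bigr => i _.
by rewrite mulr_sumr; apply: eq_bigr => j _; rewrite !mxE mulrCA !mulrA.
Qed.

Lemma amul_ev (i j k : 'I_n) : amul c (ev n i) (ev n j) 0 k = c i j k.
Proof.
rewrite mxE (sum_only (i0 := i)) => [|a ha]; last first.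
  by rewrite big1 // => b _; rewrite ev_neq ?mul0r.
rewrite (sum_only (i0 := j)) => [|b hb]; last by rewrite (ev_neq hb) mulr0 mul0r.
by rewrite !mxE !eqxx !mul1r.
Qed.

Hypothesis c_star : forall i j k : 'I_n, (k <= maxn i j)%N -> c i j k = 0.

Lemma amul_filt_l p u v : vanishes_below p u -> vanishes_below p.+1 (amul c u v).
Proof.
move=> u0 k hk; rewrite mxE; apply: big1 => i _; apply: big1 => j _.
case: (ltnP i p) => hi; first by rewrite u0 // !mul0r.
by rewrite c_star ?mulr0 //; lia.
Qed.

Lemma amul_filt_r p u v : vanishes_below p v -> vanishes_below p.+1 (amul c u v).
Proof.
move=> v0 k hk; rewrite mxE; apply: big1 => i _; apply: big1 => j _.
case: (ltnP j p) => hj; first by rewrite v0 // mulr0 mul0r.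
by rewrite c_star ?mulr0 //; lia.
Qed.

(* Hence e_{n-1}, which lies in V_{n-1}, annihilates the algebra. *)
Lemma amul_last_l u : amul c (ev n n.-1) u = 0.
Proof.
apply/rowP => k; rewrite [RHS]mxE; apply: (amul_filt_l u (@ev_vanishes n n.-1)).
by have := ltn_ord k; lia.
Qed.

Lemma amul_last_r u : amul c u (ev n n.-1) = 0.
Proof.
apply/rowP => k; rewrite [RHS]mxE; apply: (amul_filt_r u (@ev_vanishes n n.-1)).
by have := ltn_ord k; lia.
Qed.

Lemma amul_absorb u v s t :
  amul c (u + s *: ev n n.-1) (v + t *: ev n n.-1) = amul c u v.
Proof.
by rewrite amulDl !amulDr !amulZl !amulZr !amul_last_l !amul_last_r !scaler0 !addr0.
Qed.

(* The shears are automorphisms: they only add multiples of e_{n-1}, which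
   products ignore, and products have no e_0-component. *)
Lemma aut_mx_is_aut x : (1 < n)%N -> is_aut c (aut_mx n x).
Proof.
move=> hn; split=> [|u v]; first exact: aut_mx_unit.
have shift w : x *: (w *m (ev n 0)^T *m ev n n.-1) =
    (x * (w *m (ev n 0)^T) 0 0) *: ev n n.-1.
  by rewrite {1}[w *m _]mx11_scalar mul_scalar_mx scalerA.
have uv_first : amul c u v *m (ev n 0)^T = 0 by apply/vanishes_first/amul_filt_l.
by rewrite !mul_aut_mx uv_first mul0mx scaler0 addr0 !shift amul_absorb.
Qed.

Lemma amul_next_r u v (j k : 'I_n) : k = j.+1 :> nat -> vanishes_below j v ->
  amul c u v 0 k = v 0 j * \sum_i u 0 i * c i j k.
Proof.
move=> hk v0; rewrite mxE mulr_sumr; apply: eq_bigr => i _.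
rewrite (sum_only (i0 := j)) => [|l hl]; first by rewrite mulrCA mulrA.
case: (ltnP l j) => hlj; first by rewrite v0 // mulr0 mul0r.
by rewrite c_star ?mulr0 //; rewrite ord_neq in hl; lia.
Qed.

Lemma amul_next_l u v (i k : 'I_n) : k = i.+1 :> nat -> vanishes_below i u ->
  amul c u v 0 k = u 0 i * \sum_j v 0 j * c i j k.
Proof.
move=> hk u0; rewrite mxE (sum_only (i0 := i)) => [|l hl]; last first.
  apply: big1 => j _; case: (ltnP l i) => hli; first by rewrite u0 // !mul0r.
  by rewrite c_star ?mulr0 //; rewrite ord_neq in hl; lia.
by rewrite mulr_sumr; apply: eq_bigr => j _; rewrite mulrA.
Qed.

Hypothesis c_sq :
  forall i k : 'I_n, (i.+1 < n)%N -> c i i k = (k == i.+1 :> nat)%:R.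

Lemma ev_sq m : (m.+1 < n)%N -> amul c (ev n m) (ev n m) = ev n m.+1.
Proof.
move=> hm; have hm' : (m < n)%N by lia.
by apply/rowP => k; rewrite (amul_ev (Ordinal hm') (Ordinal hm')) c_sq // mxE.
Qed.

Lemma amul_next u v (j k : 'I_n) : k = j.+1 :> nat ->
  vanishes_below j u -> vanishes_below j v -> amul c u v 0 k = u 0 j * v 0 j.
Proof.
move=> hk u0 v0; rewrite (amul_next_r _ hk v0) mulrC; congr (_ * _).
rewrite (sum_only (i0 := j)) => [|i hi].
  by rewrite c_sq -?hk ?ltn_ord // hk eqxx mulr1.
case: (ltnP i j) => hij; first by rewrite u0 // mul0r.
by rewrite c_star ?mulr0 //; rewrite ord_neq in hi; lia.
Qed.

Lemma ann_iff a : in_Ann c a <-> exists t : CC, a = t *: ev n n.-1.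
Proof.
split=> [a_ann|[t ->] u]; last by rewrite amulZl amulZr amul_last_l amul_last_r scaler0.
have a_low : forall m, (m <= n.-1)%N -> vanishes_below m a.
  elim=> [|m IH] hm i hi; first by [].
  case: (ltnP i m) => him; first by apply: IH => //; lia.
  have hk : (i.+1 < n)%N by lia.
  have a_low_i : vanishes_below i a.
    by rewrite (_ : (i : nat) = m); [exact: IH (ltnW hm) | lia].
  have := @amul_next a (ev n i) i (Ordinal hk) erefl a_low_i (@ev_vanishes n i).
  by rewrite (proj1 (a_ann _)) mxE [ev n i 0 i]mxE eqxx mulr1 => <-.
have [n0|n_pos] := posnP n.
  by exists 0; apply/rowP => j; have := ltn_ord j; rewrite {2}n0.
have hL : (n.-1 < n)%N by lia.
exists (a 0 (Ordinal hL)); apply/rowP => j; rewrite !mxE.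
case: (eqVneq (j : nat) n.-1) => hj.
  by rewrite mulr1; congr (a 0 _); apply: val_inj.
by rewrite mulr0 (a_low n.-1) //; have := ltn_ord j; lia.
Qed.

Hypothesis c_21 : forall i j k : 'I_n,
  i = 1%N :> nat -> j = 0%N :> nat -> k = 2%N :> nat -> c i j k = 1.
Hypothesis c_1i : forall j i k : 'I_n,
  j = 0%N :> nat -> (1 <= i)%N -> k = i.+1 :> nat -> c j i k = 0.

(* e_0 e_j lies in V_{j+2} for j >= 1: it lies in V_{j+1} and its
   e_{j+1}-coordinate is c_{0j}^{j+1} = 0. *)
Lemma first_row_product (i0 j k : 'I_n) : i0 = 0%N :> nat -> (0 < j)%N ->
  k = j.+1 :> nat -> vanishes_below k.+1 (amul c (ev n i0) (ev n j)).
Proof.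
move=> h0 hj hk l hl; case: (ltnP l k) => hlk.
  by apply: (amul_filt_r _ (@ev_vanishes n j)); lia.
by rewrite amul_ev (c_1i h0 hj) //; lia.
Qed.

Section Automorphism.
Variable A : 'M[CC]_n.
Hypothesis A_unit : A \in unitmx.
Hypothesis A_mul : forall u v, amul c (u *m A) (v *m A) = amul c u v *m A.

(* phi(e_p) = phi(e_{p-1})^2 lies in V_p: the matrix A is upper triangular. *)
Lemma aut_filt m : (m < n)%N -> vanishes_below m (ev n m *m A).
Proof.
elim: m => [|m IH] hm; first by [].
by rewrite -ev_sq // -A_mul; apply: amul_filt_l; apply: IH; lia.
Qed.

Lemma aut_triangular (i j : 'I_n) : (j < i)%N -> A i j = 0.
Proof. by move=> hji; have := aut_filt (ltn_ord i) hji; rewrite ev_row mxE. Qed.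

Lemma aut_preserves p w : vanishes_below p w -> vanishes_below p (w *m A).
Proof.
move=> w0 k hk; rewrite mxE; apply: big1 => l _.
case: (ltnP l p) => hl; first by rewrite w0 // mul0r.
by rewrite aut_triangular ?mulr0 //; lia.
Qed.

Lemma aut_diag_sq (i j : 'I_n) : j = i.+1 :> nat -> A j j = A i i ^+ 2.
Proof.
move=> hj; have hi : (i.+1 < n)%N by rewrite -hj.
have := amul_next hj (aut_filt (ltn_ord i)) (aut_filt (ltn_ord i)).
by rewrite A_mul ev_sq // -hj !ev_row !mxE expr2.
Qed.

(* A is invertible and triangular, so no diagonal entry vanishes. *)
Lemma aut_diag_neq0 (i : 'I_n) : A i i != 0.
Proof.
apply: contraTneq A_unit => Aii0.
rewrite unitmxE unitfE -det_tr det_trig; last first.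
  by apply/is_trig_mxP => a b hab; rewrite mxE aut_triangular.
by rewrite (bigD1 i) //= mxE Aii0 mul0r eqxx.
Qed.

(* The first row vanishes strictly between the corner entries: by induction
   on j, the e_{j+1}-coordinate of phi(e_0) phi(e_j) is A_jj A_0j, whereas
   phi(e_0 e_j) lies in V_{j+2}. *)
Lemma aut_first_row (i0 j : 'I_n) : i0 = 0%N :> nat -> (0 < j)%N ->
  (j.+1 < n)%N -> A i0 j = 0.
Proof.
move=> h0; suff first_row_upto m :
    forall j : 'I_n, (0 < j)%N -> (j <= m)%N -> (j.+1 < n)%N -> A i0 j = 0.
  by move=> hj hjn; exact: (first_row_upto j).
elim: m => [|m IH] {}j hj0 hjm hjn; first by exfalso; lia.
case: (ltnP j m.+1) => hjm'; first by apply: IH => //; lia.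
pose k := Ordinal hjn.
have rhs : (amul c (ev n i0) (ev n j) *m A) 0 k = 0.
  exact: aut_preserves (first_row_product h0 hj0 (erefl : k = j.+1 :> nat)) _ _.
have lhs : amul c (ev n i0 *m A) (ev n j *m A) 0 k = A j j * A i0 j.
  rewrite (amul_next_r _ (erefl : k = j.+1 :> nat) (aut_filt (ltn_ord j))).
  rewrite !ev_row [row j A 0 j]mxE; congr (_ * _).
  rewrite (sum_only (i0 := j)) => [|i hi]; first by rewrite mxE c_sq // eqxx mulr1.
  rewrite mxE ord_neq in hi *; have [i_0|i_pos] := posnP i.
    by rewrite (c_1i i_0 hj0) ?mulr0.
  case: (ltnP i j) => hij; first by rewrite IH ?mul0r //; lia.
  by rewrite c_star ?mulr0 //=; lia.
move: rhs; rewrite -A_mul lhs => /eqP.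
by rewrite mulf_eq0 (negbTE (aut_diag_neq0 j)) => /eqP.
Qed.

(* The corner entry is 1: e_1 e_0 = e_2 yields A_11 A_00 = A_22, i.e.
   a^2 a = a^4 for a = A_00 != 0. *)
Lemma aut_corner (i0 : 'I_n) : (2 < n)%N -> i0 = 0%N :> nat -> A i0 i0 = 1.
Proof.
move=> hn h0; pose i1 := Ordinal (ltnW hn); pose i2 := Ordinal hn.
have lhs : amul c (ev n i1 *m A) (ev n i0 *m A) 0 i2 = A i1 i1 * A i0 i0.
  rewrite (amul_next_l _ (erefl : i2 = i1.+1 :> nat) (aut_filt (ltn_ord i1))).
  rewrite !ev_row [row i1 A 0 i1]mxE; congr (_ * _).
  rewrite (sum_only (i0 := i0)) => [|j hj]; first by rewrite mxE c_21 ?mulr1.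
  rewrite mxE ord_neq h0 in hj *; case: (ltnP j 2) => hj2.
    by rewrite aut_first_row ?mul0r //=; lia.
  by rewrite c_star ?mulr0 //=; lia.
have rhs : (amul c (ev n i1) (ev n i0) *m A) 0 i2 = A i2 i2.
  rewrite mxE (sum_only (i0 := i2)) => [|l hl]; first by rewrite amul_ev c_21 ?mul1r.
  rewrite amul_ev ord_neq /= in hl *; case: (ltnP l 2) => hl2.
    by rewrite c_star ?mul0r //=; lia.
  by rewrite aut_triangular ?mulr0 //=; lia.
move: rhs; rewrite -A_mul lhs (aut_diag_sq (i := i1) (j := i2)) //.
rewrite (aut_diag_sq (i := i0) (j := i1)) /= ?h0 // => corner_eq.
set a := A i0 i0 in corner_eq *.
have : a ^+ 3 * (a - 1) = 0.
  by transitivity ((a ^+ 2) ^+ 2 - a ^+ 2 * a); [ring | rewrite corner_eq subrr].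
move/eqP; rewrite mulf_eq0 expf_eq0 (negbTE (aut_diag_neq0 i0)) andbF /=.
by rewrite subr_eq0 => /eqP.
Qed.

Lemma aut_row0 (i0 iL : 'I_n) : (2 < n)%N -> i0 = 0%N :> nat -> iL = n.-1 :> nat ->
  ev n i0 *m A = ev n i0 + A i0 iL *: ev n n.-1.
Proof.
move=> hn h0 hL; apply/rowP => j; rewrite ev_row !mxE h0.
have [j0|j_pos] := posnP j.
  have -> : j = i0 by apply: val_inj; rewrite /= h0.
  by rewrite aut_corner // h0 (_ : (0 == n.-1)%N = false) ?mulr0 ?addr0 //; lia.
have [jL|jL] := eqVneq (j : nat) n.-1.
  have -> : j = iL by apply: val_inj; rewrite /= jL hL.
  by rewrite mulr1 add0r.
by rewrite mulr0 addr0 aut_first_row //; have := ltn_ord j; lia.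
Qed.

(* Since e_{p+1} = e_p^2 and e_{n-1} annihilates, phi(e_p) = e_p for p >= 1. *)
Lemma aut_next_row m s : (m.+1 < n)%N ->
  ev n m *m A = ev n m + s *: ev n n.-1 -> ev n m.+1 *m A = ev n m.+1.
Proof. by move=> hm hrow; rewrite -ev_sq // -A_mul hrow amul_absorb. Qed.

Lemma aut_rows m : (2 < n)%N -> (0 < m)%N -> (m < n)%N -> ev n m *m A = ev n m.
Proof.
move=> hn; elim: m => [|m IH] // _ hm.
have [m0|m_pos] := posnP m.
  rewrite m0 in hm *.
  have h0 : (0 < n)%N by lia.
  have hL : (n.-1 < n)%N by lia.
  apply: (aut_next_row (s := A (Ordinal h0) (Ordinal hL))) => //.
  exact: (@aut_row0 (Ordinal h0) (Ordinal hL) hn erefl erefl).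
by apply: (aut_next_row (s := 0)); rewrite // scale0r addr0; apply: IH => //; lia.
Qed.

Lemma aut_is_shear : (2 < n)%N -> exists x, A = aut_mx n x.
Proof.
move=> hn; have h0 : (0 < n)%N by lia.
have hL : (n.-1 < n)%N by lia.
exists (A (Ordinal h0) (Ordinal hL)); apply/row_matrixP => i.
rewrite -!ev_row mul_aut_mx ev_dot //.
have [i0|i_pos] := posnP i.
  have -> : i = Ordinal h0 by apply: val_inj.
  by rewrite (@aut_row0 (Ordinal h0) (Ordinal hL)) // mul1mx.
by rewrite aut_rows // raddf0 mul0mx scaler0 addr0.
Qed.

End Automorphism.
End Products.

Theorem mainTheorem11 (n : nat) (hn : (3 <= n)%N) (c : strconst n) :
  in_Rn c ->
  (forall a : 'rV[CC]_n, in_Ann c a <-> exists t : CC, a = t *: ev n n.-1) /\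
  (forall A : 'M[CC]_n, is_aut c A <->
     exists x : CC, A = 1%:M + x *: ((ev n 0)^T *m ev n n.-1)).
Proof.
move=> [c_star [c_sq [c_21 c_1i]]]; split=> [a|A]; first exact: ann_iff.
split=> [[A_unit A_mul]|[x ->]]; last exact: (aut_mx_is_aut c_star x (ltnW hn)).
exact: (aut_is_shear c_star c_sq c_21 c_1i A_unit A_mul hn).
Qed.
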